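(* Let $\mathcal{A}\subseteq 2^{[n]}$ be an arbitrary family of sets. For $A\in\mathcal{A}$ let $c(A)$ be the maximum $k$ such that $A$ belongs to a $k$-chain consisting of sets from $\mathcal{A}$. Then \[ \sum_{A\in\mathcal{A}} \frac{1}{\binom{n}{|A|}\,c(A)} \le 1, \] and equality holds if and only if $\mathcal{A}$ is a nonempty union of complete levels, i.e. $\mathcal{A}=\bigcup_{i\in I}\binom{[n]}{i}$ for some nonempty $I\subseteq\{0,1,\dots,n\}$.
   Context: $[n]=\{1,\dots,n\}$ and $2^{[n]}$ is its power set. A $k$-chain is a collection of $k$ sets $A_1\subsetneq A_2\subsetneq\cdots\subsetneq A_k$. $\binom{[n]}{i}$ denotes the family of all $i$-element subsets of $[n]$ (the $i$-th level). *)

From mathcomp Require Import all_boot all_order all_algebra.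
Set Implicit Arguments. Unset Strict Implicit. Unset Printing Implicit Defensive.
Import GRing.Theory Num.Theory.

Definition is_chain (n : nat) (C : {set {set 'I_n}}) : bool :=
  [forall X in C, forall Y in C, (X \subset Y) || (Y \subset X)].

Definition cmax (n : nat) (F : {set {set 'I_n}}) (A : {set 'I_n}) : nat :=
  \max_(C : {set {set 'I_n}} | [&& C \subset F, A \in C & is_chain C]) #|C|.

Definition level (n i : nat) : {set {set 'I_n}} := [set X : {set 'I_n} | #|X| == i].

From mathcomp Require Import all_boot all_order all_algebra all_fingroup zify.
Import Order.TTheory GRing.Theory Num.Theory.
Set Implicit Arguments. Unset Strict Implicit. Unset Printing Implicit Defensive.

(* A permutation s of [n] determines the maximal chain of its prefixes
   {x | s x < k}. Each set A is a prefix of n! / C(n, |A|) permutations, so the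
   sum equals the average over s of w(s) = sum of 1 / c(A) over the members A
   of F on the chain of s. These members form a chain, hence c(A) is at least
   their number and w(s) <= 1.
   Equality forces w(s) = 1 for all s, i.e. c(A) equals that number for every
   member A on the chain of s. If A is in F but A - x + y is not, compare two
   permutations whose chains differ only in passing through A or through
   A - x + y: the second chain carries strictly fewer members of F, yet both
   counts equal c of a common member. So F is closed under exchanges, hence is
   a union of levels; conversely on a union of levels I every chain meets each
   level of I, and no chain of F meets a level twice, so c = |I| everywhere. *)

Section PermutationPrefixes.
Variable n : nat.
Implicit Types (s u : {perm 'I_n}) (A B D : {set 'I_n}).

Lemma card_set_ord_ltn A : #|A| < n.+1.
Proof. by have := max_card (mem A); rewrite card_ord. Qed.

Definition perm_prefix s k : {set 'I_n} := [set x | s x < k].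

Lemma perm_of_index (e : seq 'I_n) : uniq e -> (forall x, x \in e) ->
  exists s : {perm 'I_n}, forall x, val (s x) = index x e.
Proof.
move=> e_uniq e_full.
have index_lt x : index x e < n.
  have := max_card (mem e); rewrite card_ord (card_uniqP e_uniq).
  by apply: leq_trans; rewrite index_mem.
pose f x : 'I_n := Ordinal (index_lt x).
have f_inj : injective f.
  by move=> x y [] fxy; rewrite -(nth_index x (e_full x)) fxy nth_index.
by exists (perm f_inj) => x; rewrite permE.
Qed.

Lemma perm_prefix_index (e : seq 'I_n) s k : (forall x, x \in e) ->
  (forall x, val (s x) = index x e) -> perm_prefix s k = [set x in take k e].
Proof. by move=> e_full se; apply/setP=> x; rewrite !inE se in_take. Qed.

Lemma perm_prefix_mono s j k : j <= k -> perm_prefix s j \subset perm_prefix s k.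
Proof. by move=> jk; apply/subsetP=> x; rewrite !inE => /leq_trans; apply. Qed.

Lemma card_perm_prefix s k : k <= n -> #|perm_prefix s k| = k.
Proof.
move=> kn; have -> : perm_prefix s k = s @^-1: (widen_ord kn @: [set: 'I_k]).
  apply/setP=> x; rewrite !inE; apply/idP/imsetP => [sxk|[i _ ->] /=].
    by exists (Ordinal sxk); last exact: val_inj.
  exact: ltn_ord.
rewrite card_preimset; last exact: perm_inj.
by rewrite card_imset ?cardsT ?card_ord // => i j [] /val_inj.
Qed.

Lemma perm_prefixS s x : perm_prefix s (s x).+1 = x |: perm_prefix s (s x).
Proof.
apply/setP=> y; rewrite !inE ltnS leq_eqVlt -(inj_eq (@perm_inj _ s)).
by rewrite -val_eqE.
Qed.

Lemma perm_prefix_mul u s k : perm_prefix (u * s) k = u @^-1: perm_prefix s k.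
Proof. by apply/setP=> x; rewrite !inE permM. Qed.

Lemma exists_perm_prefix A : exists s, perm_prefix s #|A| = A.
Proof.
set e := enum A ++ enum (~: A).
have e_uniq : uniq e.
  rewrite cat_uniq !enum_uniq andbT /=; apply/hasPn => x.
  by rewrite !mem_enum inE => ->.
have e_full x : x \in e by rewrite mem_cat !mem_enum inE orbN.
have [s se] := perm_of_index e_uniq e_full.
exists s; rewrite (perm_prefix_index _ e_full se) cardE take_size_cat //.
by apply/setP=> x; rewrite inE mem_enum.
Qed.

Lemma exists_perm_prefix_adjacent D a b : a \notin D -> b \notin D -> a != b ->
  exists s, [/\ perm_prefix s #|D| = D, val (s a) = #|D| & val (s b) = #|D|.+1].
Proof.
move=> aD bD ab; set e := enum D ++ a :: b :: enum (~: (a |: (b |: D))).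
have e_uniq : uniq e.
  rewrite cat_uniq !enum_uniq /= !mem_enum !inE (negbTE aD) (negbTE bD).
  rewrite (negbTE ab) !eqxx enum_uniq /= orbT !andbT mem_enum !inE eqxx andbT.
  by apply/hasPn => x; rewrite !mem_enum !inE !negb_or => /and3P[_ _ ->].
have e_full x : x \in e.
  rewrite mem_cat !inE !mem_enum !inE.
  by case: (x \in D); case: (x == a); case: (x == b).
have [s se] := perm_of_index e_uniq e_full.
exists s; split.
- rewrite (perm_prefix_index _ e_full se) cardE take_size_cat //.
  by apply/setP=> x; rewrite inE mem_enum.
- by rewrite se index_cat mem_enum (negbTE aD) /= eqxx addn0 cardE.
- by rewrite se index_cat mem_enum (negbTE bD) /= (negbTE ab) eqxx addn1 cardE.
Qed.

Lemma perm_prefix_swap_adjacent s a b j : val (s b) = (s a).+1 -> j != val (s b) ->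
  perm_prefix (s * tperm (s a) (s b)) j = perm_prefix s j.
Proof.
move=> sb jb; apply/setP=> x; rewrite !inE permM.
case: tpermP => [->|->|//]; rewrite sb; lia.
Qed.

Lemma exists_perms_differing_at D x y : x \notin D -> y \notin D -> x != y ->
  exists s s', [/\ perm_prefix s #|D|.+1 = x |: D, perm_prefix s' #|D|.+1 = y |: D
    & forall j, j != #|D|.+1 -> perm_prefix s' j = perm_prefix s j].
Proof.
move=> xD yD xy; have [s [sD sx sy]] := exists_perm_prefix_adjacent xD yD xy.
pose s' := (s * tperm (s x) (s y))%g.
have sy_sx : val (s y) = (s x).+1 by rewrite sy sx.
have s's : forall j, j != #|D|.+1 -> perm_prefix s' j = perm_prefix s j.
  by move=> j; rewrite -sy; apply: perm_prefix_swap_adjacent.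
exists s, s'; split=> //.
  by rewrite -sx perm_prefixS sx sD.
have s'y : val (s' y) = #|D| by rewrite permM tpermR sx.
by rewrite -s'y perm_prefixS s'y s's ?sD // neq_ltn ltnSn.
Qed.

Definition perms_with_prefix A := [set s | perm_prefix s #|A| == A].

Lemma card_perms_with_prefix_le A B : #|A| = #|B| ->
  #|perms_with_prefix A| <= #|perms_with_prefix B|.
Proof.
move=> AB; have [sA sAA] := exists_perm_prefix A; have [sB sBB] := exists_perm_prefix B.
pose u := (sB * sA^-1)%g.
rewrite -(card_imset _ (mulgI u)); apply/subset_leq_card/subsetP => _ /imsetP[s + ->].
rewrite !inE => /eqP sA'; rewrite -AB perm_prefix_mul sA' -sAA -perm_prefix_mul.
by rewrite /u mulgKV AB sBB.
Qed.

Lemma binomial_mul_card_perms_with_prefix A :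
  'C(n, #|A|) * #|perms_with_prefix A| = n`!.
Proof.
have A_le_n := card_set_ord_ltn A.
rewrite -{1}[n]card_ord -card_draws -card_Sn -sum_nat_const.
transitivity (\sum_(B in [set B : {set 'I_n} | #|B| == #|A|]) #|perms_with_prefix B|).
  apply: eq_bigr => B; rewrite inE => /eqP BA.
  by apply/eqP; rewrite eqn_leq !card_perms_with_prefix_le.
rewrite -[RHS]sum1_card; under eq_bigr do rewrite -sum1_card.
rewrite (exchange_big_dep predT) //=; apply: eq_bigr => s _.
rewrite (big_pred1 (perm_prefix s #|A|)) // => B; rewrite !inE.
apply/andP/eqP => [[/eqP -> /eqP //]|->]; by rewrite card_perm_prefix.
Qed.

Lemma card_perms_with_prefix_gt0 A : 0 < #|perms_with_prefix A|.
Proof.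
have := binomial_mul_card_perms_with_prefix A; rewrite lt0n.
by case: eqP => // ->; rewrite muln0 => n_fact; have := fact_gt0 n; rewrite -n_fact.
Qed.

End PermutationPrefixes.

Lemma exchange_closed_eq_card (T : finType) (F : {set {set T}}) :
  (forall (A : {set T}) x y, A \in F -> x \in A -> y \notin A -> y |: (A :\ x) \in F) ->
  forall A B : {set T}, A \in F -> #|A| = #|B| -> B \in F.
Proof.
move=> exchange A B; move: {2}#|A :\: B| (leqnn #|A :\: B|) => m.
elim: m A => [|m IH] A AB_m AF AB.
  suff -> : B = A by [].
  apply/esym/eqP; rewrite eqEcard AB leqnn andbT -setD_eq0 -cards_eq0.
  by rewrite -leqn0.
have [sAB|/subsetPn[x xA xB]] := boolP (A \subset B).
  by have /eqP <- : A == B by rewrite eqEcard sAB AB leqnn.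
have /subsetPn[y yB yA] : ~~ (B \subset A).
  by apply: contraNN xB => sBA; have /eqP -> : B == A by rewrite eqEcard sBA AB leqnn.
apply: (IH _ _ (exchange A x y AF xA yA)); last first.
  by rewrite cardsU1 !inE (negbTE yA) andbF -AB [RHS](cardsD1 x A) xA.
apply: (@leq_trans #|(A :\: B) :\ x|).
  apply/subset_leq_card/subsetP => z; rewrite !inE.
  by case: (z =P y) => [->|_]; [rewrite yB | case/and3P=> -> -> -> /=].
by move: AB_m; rewrite (cardsD1 x (A :\: B)) !inE xB xA.
Qed.

Lemma cmax_ge (n : nat) (F C : {set {set 'I_n}}) A :
  C \subset F -> A \in C -> is_chain C -> #|C| <= cmax F A.
Proof.
by move=> CF AinC C_chain; apply: (leq_bigmax_cond (P := fun C => _)); rewrite CF AinC C_chain.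
Qed.

Section Levels.
Variable n : nat.
Implicit Types (F : {set {set 'I_n}}) (I : {set 'I_n.+1}) (A B X Y : {set 'I_n}).

Lemma mem_levels I X : (X \in \bigcup_(i in I) level n i) = (inord #|X| \in I).
Proof.
apply/bigcupP/idP => [[i iI]|XI].
  rewrite inE => /eqP Xi; suff -> : inord #|X| = i by [].
  by apply: val_inj; rewrite /= inordK ?Xi.
by exists (inord #|X|); rewrite // inE inordK ?card_set_ord_ltn.
Qed.

Definition card_levels F : {set 'I_n.+1} := [set i : 'I_n.+1 | [exists A in F, #|A| == i]].

Lemma eq_card_closed_levels F :
  (forall A B, A \in F -> #|A| = #|B| -> B \in F) ->
  F = \bigcup_(i in card_levels F) level n i.
Proof.
move=> F_closed; apply/setP => X; rewrite mem_levels inE.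
apply/idP/existsP => [XF|[A /andP[AF /eqP AX]]].
  by exists X; rewrite XF /= inordK ?card_set_ord_ltn.
by apply: F_closed AF _; rewrite AX inordK ?card_set_ord_ltn.
Qed.

Lemma cmax_levels_le I A : cmax (\bigcup_(i in I) level n i) A <= #|I|.
Proof.
apply/bigmax_leqP => C /and3P[CF _ C_chain].
have card_inj : {in C &, injective (fun X => inord #|X| : 'I_n.+1)}.
  move=> X Y XC YC /(congr1 val); rewrite /= !inordK ?card_set_ord_ltn // => XY.
  have /orP[sXY|sYX] := forall_inP (forall_inP C_chain X XC) Y YC.
    by apply/eqP; rewrite eqEcard sXY XY leqnn.
  by apply/eqP; rewrite eq_sym eqEcard sYX XY leqnn.
rewrite -(card_in_imset card_inj); apply/subset_leq_card/subsetP => _ /imsetP[X XC ->].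
by rewrite -mem_levels (subsetP CF).
Qed.

End Levels.

Local Open Scope ring_scope.

Lemma natr_inv_mulrn (R : numFieldType) m : (0 < m)%N -> (m%:R : R)^-1 *+ m = 1.
Proof. by move=> m_gt0; rewrite -[LHS]mulr_natl mulfV // pnatr_eq0 -lt0n. Qed.

Section SumInverses.
Variables (R : numFieldType) (I : finType) (P : {pred I}) (c : I -> nat).
Hypothesis card_le_c : forall i, i \in P -> (#|P| <= c i)%N.

Lemma inv_le_inv_card i : i \in P -> (c i)%:R^-1 <= (#|P|%:R : R)^-1.
Proof.
move=> iP; have P_gt0 : (0 < #|P|)%N by apply/card_gt0P; exists i.
rewrite lef_pV2 ?ler_nat ?card_le_c // posrE ltr0n //.
exact: leq_trans P_gt0 (card_le_c iP).
Qed.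

Lemma sum_inv_card_le1 : \sum_(i in P) (c i)%:R^-1 <= 1 :> R.
Proof.
have [P0|P_gt0] := posnP #|P|.
  by rewrite big_pred0 // => i; rewrite (card0_eq P0).
apply: le_trans (ler_sum _ (fun i => @inv_le_inv_card i)) _.
by rewrite sumr_const natr_inv_mulrn.
Qed.

Lemma sum_inv_card_eq1 :
  \sum_(i in P) (c i)%:R^-1 = 1 :> R <-> (0 < #|P|)%N /\ {in P, forall i, c i = #|P|}.
Proof.
split=> [sum1|[P_gt0 cP]]; last first.
  rewrite (eq_bigr (fun=> #|P|%:R^-1)) => [|i /cP -> //].
  by rewrite sumr_const natr_inv_mulrn.
have P_gt0 : (0 < #|P|)%N.
  rewrite lt0n; apply: contra_eqN sum1 => /eqP/card0_eq P0.
  by rewrite big_pred0 // eq_sym oner_eq0.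
split=> // i iP.
have slack0 : \sum_(j in P) ((#|P|%:R : R)^-1 - (c j)%:R^-1) = 0.
  by rewrite sumrB sum1 sumr_const natr_inv_mulrn ?subrr.
have slack_ge0 j : j \in P -> 0 <= (#|P|%:R : R)^-1 - (c j)%:R^-1.
  by move=> jP; rewrite subr_ge0 inv_le_inv_card.
have /eqP := psumr_eq0P slack_ge0 slack0 iP.
by rewrite subr_eq0 => /eqP/invr_inj/eqP; rewrite eqr_nat => /eqP.
Qed.

End SumInverses.

Lemma sumr_le1_eq_card (R : numDomainType) (I : finType) (f : I -> R) :
  (forall i, f i <= 1) -> \sum_i f i = #|I|%:R <-> forall i, f i = 1.
Proof.
move=> f_le1; split=> [sum_f i|f1]; last by rewrite (eq_bigr _ (fun i _ => f1 i)) sumr_const.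
have slack0 : \sum_i (1 - f i) = 0 by rewrite sumrB sum_f sumr_const subrr.
have slack_ge0 j : true -> 0 <= 1 - f j by rewrite subr_ge0.
by have /eqP := psumr_eq0P slack_ge0 slack0 (i := i) isT; rewrite subr_eq0 => /eqP.
Qed.

Section PermutationWeights.
Variables (n : nat) (F : {set {set 'I_n}}).
Implicit Types (s : {perm 'I_n}) (A : {set 'I_n}).

Definition prefix_chain s := [set A in F | perm_prefix s #|A| == A].

Definition perm_weight s : rat := \sum_(A in prefix_chain s) (cmax F A)%:R^-1.

Lemma prefix_chain_is_chain s : is_chain (prefix_chain s).
Proof.
apply/forall_inP => X /setIdP[_ /eqP sX]; apply/forall_inP => Y /setIdP[_ /eqP sY].
rewrite -sX -sY; case: (leqP #|X| #|Y|) => [|/ltnW] /(perm_prefix_mono s) ->.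
  by [].
by rewrite orbT.
Qed.

Lemma card_prefix_chain_le_cmax s A : A \in prefix_chain s ->
  (#|prefix_chain s| <= cmax F A)%N.
Proof.
move=> A_s; apply: cmax_ge A_s (prefix_chain_is_chain s).
by apply/subsetP => B /setIdP[].
Qed.

Lemma perm_weight_le1 s : perm_weight s <= 1.
Proof. exact/sum_inv_card_le1/card_prefix_chain_le_cmax. Qed.

Lemma perm_weight_eq1 s : perm_weight s = 1 <->
  (0 < #|prefix_chain s|)%N /\ {in prefix_chain s, forall A, cmax F A = #|prefix_chain s|}.
Proof. exact/sum_inv_card_eq1/card_prefix_chain_le_cmax. Qed.

Lemma lym_sum_perm_weight :
  \sum_(A in F) (('C(n, #|A|) * cmax F A)%N%:R)^-1 = n`!%:R^-1 * \sum_s perm_weight s.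
Proof.
rewrite /perm_weight (exchange_big_dep (mem F)) /= => [|s A _ /setIdP[] //].
rewrite mulr_sumr; apply: eq_bigr => A AF.
rewrite (eq_bigl (mem (perms_with_prefix A))) => [|s]; last by rewrite !inE AF.
have N_neq0 : #|perms_with_prefix A|%:R != 0 :> rat.
  by rewrite pnatr_eq0 -lt0n card_perms_with_prefix_gt0.
rewrite sumr_const -(binomial_mul_card_perms_with_prefix A) !natrM !invfM.
by rewrite -mulrA -[(cmax F A)%:R^-1 *+ _]mulr_natl mulKf.
Qed.

Lemma lym_sum_le1 : \sum_(A in F) (('C(n, #|A|) * cmax F A)%N%:R : rat)^-1 <= 1.
Proof.
rewrite lym_sum_perm_weight ler_pdivrMl ?ltr0n ?fact_gt0 // mulr1.
rewrite -card_Sn -sum1_card natr_sum ler_sum // => s _; exact: perm_weight_le1.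
Qed.

Lemma lym_sum_eq1 : \sum_(A in F) (('C(n, #|A|) * cmax F A)%N%:R : rat)^-1 = 1 <->
  forall s, perm_weight s = 1.
Proof.
rewrite lym_sum_perm_weight -(sumr_le1_eq_card perm_weight_le1) card_Sn.
have fact_neq0 : n`!%:R != 0 :> rat by rewrite pnatr_eq0 -lt0n fact_gt0.
split=> [sum1|->]; last by rewrite mulVf.
by rewrite -[LHS](mulVKf fact_neq0) sum1 mulr1.
Qed.

End PermutationWeights.

Lemma perm_weights1_exchange n (F : {set {set 'I_n}}) :
  (forall s, perm_weight F s = 1) ->
  forall A x y, A \in F -> x \in A -> y \notin A -> y |: (A :\ x) \in F.
Proof.
move=> weights1 A x y AF xA yA; set D := A :\ x.
have xD : x \notin D by rewrite !inE eqxx.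
have yD : y \notin D by rewrite !inE (negbTE yA) andbF.
have xy : x != y by apply: contraNneq yA => <-.
have [s [s' [sA s'B ss']]] := exists_perms_differing_at xD yD xy.
have cardA : #|A| = #|D|.+1 by rewrite (cardsD1 x A) xA.
rewrite setD1K // in sA; apply/contraT => BF.
have chain_lt : prefix_chain F s' \proper prefix_chain F s.
  apply/properP; split.
    apply/subsetP => C /setIdP[CF /eqP s'C]; rewrite inE CF -{2}s'C /=.
    have [CD|] := eqVneq #|C| #|D|.+1; last by move/ss' ->.
    by move: BF; rewrite -s'B -CD s'C CF.
  exists A; first by rewrite inE AF cardA sA eqxx.
  rewrite inE AF cardA s'B /=; apply: contraTneq xA => <-.
  by rewrite !inE (negbTE xy) eqxx.
have [s'_gt0 cmax_s'] := (perm_weight_eq1 F s').1 (weights1 s').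
have [_ cmax_s] := (perm_weight_eq1 F s).1 (weights1 s).
have [C C_s'] := card_gt0P s'_gt0.
have := proper_card chain_lt.
by rewrite -(cmax_s' C C_s') -(cmax_s C (subsetP (proper_sub chain_lt) C C_s')) ltnn.
Qed.

Lemma perm_weight_levels n (I : {set 'I_n.+1}) s : I != set0 ->
  perm_weight (\bigcup_(i in I) level n i) s = 1.
Proof.
set F := \bigcup_(i in I) level n i => I_neq0.
have prefix_inj : injective (fun i : 'I_n.+1 => perm_prefix s i).
  move=> i j /(congr1 (fun X : {set 'I_n} => #|X|)).
  by rewrite /= !(card_perm_prefix s (ltnSE (ltn_ord _))) => /val_inj.
have I_le_chain : (#|I| <= #|prefix_chain F s|)%N.
  rewrite -(card_imset I prefix_inj); apply/subset_leq_card/subsetP => _ /imsetP[i iI ->].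
  have card_i : #|perm_prefix s i| = i by rewrite (card_perm_prefix s (ltnSE (ltn_ord i))).
  rewrite inE card_i eqxx andbT mem_levels card_i.
  by suff -> : inord i = i by []; apply: val_inj; rewrite /= inordK.
apply/perm_weight_eq1; split; first by apply: leq_trans I_le_chain; rewrite card_gt0.
move=> A A_s; apply/eqP; rewrite eqn_leq card_prefix_chain_le_cmax // andbT.
exact: leq_trans (cmax_levels_le I A) I_le_chain.
Qed.

Theorem theorem4 (n : nat) (F : {set {set 'I_n}}) :
  (\sum_(A in F) ((('C(n, #|A|) * cmax F A)%N)%:R : rat)^-1 <= 1) /\
  ((\sum_(A in F) ((('C(n, #|A|) * cmax F A)%N)%:R : rat)^-1 = 1) <->
   exists I : {set 'I_n.+1},
     I != set0 /\ F = \bigcup_(i in I) level n i).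
Proof.
split; first exact: lym_sum_le1.
rewrite lym_sum_eq1; split=> [weights1|[I [I_neq0 ->]] s]; last exact: perm_weight_levels.
have F_closed := exchange_closed_eq_card (perm_weights1_exchange weights1).
exists (card_levels F); split; last exact: eq_card_closed_levels.
have [chain_gt0 _] := (perm_weight_eq1 F 1%g).1 (weights1 1%g).
have [A /setIdP[AF _]] := card_gt0P chain_gt0.
apply/set0Pn; exists (inord #|A|); rewrite inE; apply/existsP; exists A.
by rewrite AF /= inordK ?card_set_ord_ltn.
Qed.
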